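(* Let $X=\{m_1,\dots,m_n\}$ be a Macaulay basis of $M$ and let $s_1,\dots,s_k$ be a generating set of $\operatorname{Syz}(\operatorname{lf}(m_1),\dots,\operatorname{lf}(m_n))$ consisting of homogeneous elements with respect to the $B$-grading of $R^{\oplus n}$ associated to $b_i=\deg m_i$. For each $j$ choose $h_j=(h_{j1},\dots,h_{jn})\in R^{\oplus n}$ with $\sum_is_{ji}m_i=\sum_ih_{ji}m_i$ such that $h_j=0$ if $\sum_is_{ji}m_i=0$, and otherwise every homogeneous component of $h_j$ has degree at most $\deg\big(\sum_is_{ji}m_i\big)$ (such $h_j$ arise from a reduction $\sum_is_{ji}m_i\to_X^*0$), and set $s'_j=s_j-h_j\in\operatorname{Syz}(m_1,\dots,m_n)$. Suppose $R^{\oplus n}$ carries a $B'$-grading refining this $B$-grading, and that $s_1,\dots,s_k$ is a Macaulay basis of $\operatorname{Syz}(\operatorname{lf}(m_1),\dots,\operatorname{lf}(m_n))$ with respect to the $B'$-grading. Then $s'_1,\dots,s'_k$ is a Macaulay basis of $\operatorname{Syz}(m_1,\dots,m_n)$ with respect to the $B'$-grading.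
   Context: Standing setup. $\mathbf{k}$ is a field. $(A,+,0)$ is a finitely generated cancellative commutative monoid with a well-ordered total order such that $0<a$ for $a\ne0$ and $a\le a'\Rightarrow a+c\le a'+c$. $R=\bigoplus_{a\in A}R_a$ is a commutative Noetherian $\mathbf{k}$-algebra with $R_aR_{a'}\subseteq R_{a+a'}$. $B$ (and likewise $B'$) is a well-ordered totally ordered set with an action $(a,b)\mapsto a\cdot b$ of $A$ with $0\cdot b=b$, $(a+a')\cdot b=a\cdot(a'\cdot b)$, monotone and cancellative in each argument. $N=\bigoplus_{b\in B}N_b$ is a Noetherian $R$-module with $R_aN_b\subseteq N_{a\cdot b}$; $M\subseteq N$ an $R$-submodule. For a nonzero element $m$ of a graded module, $\deg m$ is the largest degree of a nonzero homogeneous component and $\operatorname{lf}(m)$ is that component. A finite set of nonzero elements $\{m_1,\dots,m_n\}$ of a submodule $P$ of a graded module is a Macaulay basis of $P$ (w.r.t. that grading) if the submodule generated by $\{\operatorname{lf}(p):0\ne p\in P\}$ equals that generated by $\operatorname{lf}(m_1),\dots,\operatorname{lf}(m_n)$. Reduction: $W_b(X)=\operatorname{span}_{\mathbf{k}}\{r\operatorname{lf}(x): x\in X,\ r\in R\text{ homogeneous},\ r\operatorname{lf}(x)\in N_b\}$; $m\to_X m'$ iff $\{b: m_b\ne0,\ m_b\in W_b(X)\}$ is nonempty with maximum $b$ and $m'=m-\sum_jr_jx_j$ with $x_j\in X$, $r_j$ homogeneous, $r_j\operatorname{lf}(x_j)\in N_b$, $m_b=\sum_jr_j\operatorname{lf}(x_j)$;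 $\to_X^*$ reflexive–transitive closure. Syzygies: $\operatorname{Syz}(u_1,\dots,u_n)=\{(f_i)\in R^{\oplus n}:\sum_if_iu_i=0\}$. The $B$-grading of $R^{\oplus n}$ associated to $b_1,\dots,b_n$ is $(R^{\oplus n})_b=\bigoplus_i\bigoplus_{a\in A:\ a\cdot b_i=b}R_ae_i$. A $B'$-grading $R^{\oplus n}=\bigoplus_{b'\in B'}(R^{\oplus n})'_{b'}$ (with $R_a(R^{\oplus n})'_{b'}\subseteq(R^{\oplus n})'_{a\cdot b'}$) refines the $B$-grading if there is an order-preserving map $g:B'\to B$ with $g(a\cdot b')=a\cdot g(b')$ and $(R^{\oplus n})_b=\bigoplus_{b'\in g^{-1}(b)}(R^{\oplus n})'_{b'}$ for all $b\in B$. *)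

From HB Require Import structures.
From mathcomp Require Import all_boot all_order all_algebra.
From Stdlib Require Import ClassicalEpsilon.
Set Implicit Arguments. Unset Strict Implicit. Unset Printing Implicit Defensive.
Import Order.TTheory GRing.Theory.
Local Open Scope ring_scope.

Definition is_submod (R : pzRingType) (V : lmodType R) (P : V -> Prop) : Prop :=
  [/\ P 0, (forall x y, P x -> P y -> P (x + y)) & (forall (r : R) x, P x -> P (r *: x))].

Definition spanP (R : pzRingType) (V : lmodType R) (G : V -> Prop) (x : V) : Prop :=
  exists s : seq V, (forall i : 'I_(size s), G (nth 0 s i)) /\
    exists c : 'I_(size s) -> R, x = \sum_(i < size s) c i *: nth 0 s i.

Definition fin_gen (R : pzRingType) (V : lmodType R) (P : V -> Prop) : Prop :=
  exists (l : nat) (g : 'I_l -> V), forall x, P x <-> spanP (fun y => exists i, y = g i) x.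

Definition noetherian_mod (R : pzRingType) (V : lmodType R) : Prop :=
  forall P : V -> Prop, is_submod P -> fin_gen P.

Definition noetherian_ring (R : comPzRingType) : Prop := noetherian_mod R^o.

(* V = \bigoplus_{i in I} V_i as k-vector spaces, given by the projections pi i
   onto the components V_i = { x | pi i x = x }. *)
Definition is_grading (k : fieldType) (R : comAlgType k) (I : eqType) (V : lmodType R)
    (pi : I -> V -> V) : Prop :=
  [/\ (forall i x y, pi i (x + y) = pi i x + pi i y),
      (forall i (c : k) x, pi i ((c%:A : R) *: x) = (c%:A : R) *: pi i x),
      (forall i j x, pi i (pi j x) = if i == j then pi j x else 0) &
      (forall x, exists s : seq I, [/\ uniq s, (forall i, i \notin s -> pi i x = 0)
                                     & x = \sum_(i <- s) pi i x])].

Definition homog (I : Type) (V : zmodType) (pi : I -> V -> V) (i : I) (x : V) : Prop :=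
  pi i x = x.

Definition is_deg (d : Order.disp_t) (I : orderType d) (V : zmodType)
    (pi : I -> V -> V) (x : V) (b : I) : Prop :=
  pi b x != 0 /\ (forall b', pi b' x != 0 -> (b' <= b)%O).

Definition is_lf (d : Order.disp_t) (I : orderType d) (V : zmodType)
    (pi : I -> V -> V) (x y : V) : Prop :=
  exists b, is_deg pi x b /\ y = pi b x.

Definition macaulay_basis (R : pzRingType) (V : lmodType R) (d : Order.disp_t) (I : orderType d)
    (pi : I -> V -> V) (P : V -> Prop) (n : nat) (m : 'I_n -> V) : Prop :=
  (forall i, m i != 0 /\ P (m i)) /\
  (forall y, spanP (fun z => exists p, [/\ P p, p != 0 & is_lf pi p z]) y <->
             spanP (fun z => exists i, is_lf pi (m i) z) y).

Definition ordered_monoid (A : nmodType) (leA : rel A) : Prop :=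
  [/\ (forall a, leA a a), (forall a b c, leA a b -> leA b c -> leA a c),
      (forall a b, leA a b -> leA b a -> a = b) & (forall a b, leA a b || leA b a)] /\
  [/\ well_founded (fun a b => leA a b && (a != b)),
      (forall a, a != 0 -> leA 0 a && (0 != a)) &
      (forall a a' c, leA a a' -> leA (a + c) (a' + c))].

Definition cancellative_fg_monoid (A : nmodType) : Prop :=
  (forall a a' c : A, a + c = a' + c -> a = a') /\
  (exists (l : nat) (gen : 'I_l -> A), forall a, exists c : 'I_l -> nat,
       a = \sum_(i < l) gen i *+ c i).

Definition ordered_action (A : nmodType) (leA : rel A) (d : Order.disp_t) (B : orderType d)
    (act : A -> B -> B) : Prop :=
  [/\ well_founded (fun x y : B => (x < y)%O),
      (forall b, act 0 b = b) &
      (forall a a' b, act (a + a') b = act a (act a' b))] /\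
  [/\
      (forall a a' b, leA a a' -> (act a b <= act a' b)%O),
      (forall a b b', (b <= b')%O -> (act a b <= act a b')%O),
      (forall a a' b, act a b = act a' b -> a = a') &
      (forall a b b', act a b = act a b' -> b = b')].

Definition graded_algebra (k : fieldType) (R : comAlgType k) (A : nmodType)
    (piR : A -> R -> R) : Prop :=
  is_grading (piR : A -> R^o -> R^o) /\
  (forall a a' (r r' : R), homog piR a r -> homog piR a' r' -> homog piR (a + a') (r * r')).

Definition graded_module (k : fieldType) (R : comAlgType k) (A : nmodType) (I : eqType)
    (V : lmodType R) (piR : A -> R -> R) (act : A -> I -> I) (pi : I -> V -> V) : Prop :=
  is_grading pi /\
  (forall a b (r : R) x, homog piR a r -> homog pi b x -> homog pi (act a b) (r *: x)).

Definition comb (R : pzRingType) (V : lmodType R) (n : nat) (f : 'rV[R]_n) (u : 'I_n -> V) : V :=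
  \sum_(i < n) f 0 i *: u i.

Definition syz (R : pzRingType) (V : lmodType R) (n : nat) (u : 'I_n -> V) (f : 'rV[R]_n) : Prop :=
  comb f u = 0.

(* The B-grading of R^n associated to b_1..b_n:
   (R^n)_b = \bigoplus_i \bigoplus_{a : a.b_i = b} R_a e_i.
   Since the action is cancellative in a, there is at most one such a for each i. *)
Definition assoc_grading (R : pzRingType) (A : nmodType) (I : eqType) (piR : A -> R -> R)
    (act : A -> I -> I) (n : nat) (bs : 'I_n -> I) (b : I) (f : 'rV[R]_n) : 'rV[R]_n :=
  \row_(i < n) (let a := epsilon (inhabits (0 : A)) (fun a => act a (bs i) = b) in
                if act a (bs i) == b then piR a (f 0 i) else 0).

Definition refines (A : nmodType) (d : Order.disp_t) (B : orderType d)
    (d' : Order.disp_t) (B' : orderType d') (actB : A -> B -> B) (actB' : A -> B' -> B')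
    (V : zmodType) (pi : B -> V -> V) (pi' : B' -> V -> V) : Prop :=
  exists g : B' -> B,
    [/\ (forall x y, (x <= y)%O -> (g x <= g y)%O),
        (forall a x, g (actB' a x) = actB a (g x)) &
        (forall b v, homog pi b v <-> (forall b', pi' b' v != 0 -> g b' = b))].

(* Let F = R^n carry the B-grading piB associated to b_i = deg m_i, and the
   finer B'-grading piF refining it along g : B' -> B.  The proof rests on two
   facts about a row p in F:
   - [lf_refined]: if p has piB-degree b, the piF-leading form of p is that of
     its piB-leading part piB b p (the refinement only splits each
     B-component further, and g is monotone);
   - [comb_top]: if all piB-components of p lie in degrees <= b, then
     sum_i p_i m_i has no component above b and its b-component is
     sum_i (piB b p)_i lf(m_i).
   From [comb_top]: the leading part of a syzygy of the m_i is a syzygy of the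
   lf(m_i) ([syz_leading_part]), and, using the degree bound on h_j, each
   s'_j = s_j - h_j has piB-degree deg s_j with leading part s_j
   ([lift_leading]).  With [lf_refined] the generators of the two modules of
   piF-leading forms for Syz(m) and for the s'_j are thus sandwiched between
   those for Syz(lf m) and for the s_j, which span the same module by
   hypothesis. *)

From HB Require Import structures.
From mathcomp Require Import all_boot all_order all_algebra.
From Stdlib Require Import ClassicalEpsilon.
Import Order.TTheory GRing.Theory.
Local Open Scope ring_scope.
Set Implicit Arguments. Unset Strict Implicit.

Section Grading.
Variables (k : fieldType) (R : comAlgType k) (I : eqType) (V : lmodType R)
  (pi : I -> V -> V).
Hypothesis grading_pi : is_grading pi.

Lemma gradingD i x y : pi i (x + y) = pi i x + pi i y.
Proof. by case: grading_pi => piD _ _ _; apply: piD. Qed.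

Lemma grading0 i : pi i 0 = 0.
Proof. by apply: (addIr (pi i 0)); rewrite add0r -gradingD addr0. Qed.

Lemma grading_sum (J : Type) i (r : seq J) (F : J -> V) :
  pi i (\sum_(j <- r) F j) = \sum_(j <- r) pi i (F j).
Proof. exact: (big_morph _ (gradingD i) (grading0 i)). Qed.

Lemma grading_idem i j x : pi i (pi j x) = if i == j then pi j x else 0.
Proof. by case: grading_pi => _ _ piK _; apply: piK. Qed.

Lemma grading_decomp x : exists r : seq I,
  (forall i, i \notin r -> pi i x = 0) /\ x = \sum_(i <- r) pi i x.
Proof. by case: grading_pi => _ _ _ /(_ x) [r [_ supp x_sum]]; exists r. Qed.

Lemma homogP i j x : homog pi j x -> pi i x = if i == j then x else 0.
Proof. by rewrite /homog => <-; rewrite grading_idem. Qed.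

Lemma grading_nz x : x != 0 -> exists i, pi i x != 0.
Proof.
move=> x_nz; have [r [_ x_sum]] := grading_decomp x.
apply/not_all_not_ex => all0; move: x_nz; rewrite x_sum big1_seq ?eqxx // => i _.
by apply/eqP/negbNE/negP; apply: all0.
Qed.

End Grading.

Lemma span_mono (R : pzRingType) (V : lmodType R) (G G' : V -> Prop) y :
  (forall z, G z -> G' z) -> spanP G y -> spanP G' y.
Proof. by move=> GG' [r [Gr comb_y]]; exists r; split=> // i; apply: GG'. Qed.

Section Degree.
Variables (d : Order.disp_t) (T : orderType d).

Lemma seq_max (l : seq T) : l != [::] ->
  exists2 x, x \in l & forall y, y \in l -> (y <= x)%O.
Proof.
elim: l => // a [|b l] IH _.
  by exists a; rewrite ?mem_head // => y; rewrite inE => /eqP ->.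
have [x x_in x_max] := IH isT.
have [xa|ax] := leP x a.
  exists a; first exact: mem_head.
  by move=> y; rewrite inE => /orP [/eqP -> //|/x_max yx]; apply: le_trans yx xa.
exists x; first by rewrite inE x_in orbT.
by move=> y; rewrite inE => /orP [/eqP -> |/x_max //]; apply: ltW.
Qed.

Lemma is_deg_exists (V : zmodType) (pi : T -> V -> V) x (l : seq T) :
  (forall i, pi i x != 0 -> i \in l) -> (exists i, pi i x != 0) ->
  exists b, is_deg pi x b.
Proof.
move=> supp [i0 i0_nz].
have : [seq i <- l | pi i x != 0] != [::].
  apply/eqP => E; move: (mem_filter (fun i => pi i x != 0) i0 l).
  by rewrite E i0_nz supp.
move/seq_max => [b]; rewrite mem_filter => /andP [b_nz _] b_max.
by exists b; split => // b' b'_nz; apply: b_max; rewrite mem_filter b'_nz supp.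
Qed.

Lemma grading_deg_exists (k : fieldType) (R : comAlgType k) (V : lmodType R)
    (pi : T -> V -> V) x :
  is_grading pi -> x != 0 -> exists b, is_deg pi x b.
Proof.
move=> gr x_nz; have [r [supp _]] := grading_decomp gr x.
apply: (is_deg_exists (l := r)); last exact: grading_nz.
by move=> i; apply: contraR => /supp ->; rewrite eqxx.
Qed.

End Degree.

Section AssociatedGrading.
Variables (k : fieldType) (R : comAlgType k) (A : nmodType) (I : eqType)
  (actB : A -> I -> I) (piR : A -> R -> R) (n : nat) (bdeg : 'I_n -> I).
Hypothesis grading_R : is_grading (piR : A -> R^o -> R^o).
Hypothesis act_cancel : forall a a' b, actB a b = actB a' b -> a = a'.

Local Notation piB := (assoc_grading piR actB bdeg).

Lemma assoc_gradingE c f i a : actB a (bdeg i) = c -> piB c f 0 i = piR a (f 0 i).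
Proof.
move=> act_a; rewrite mxE /=.
set a' := epsilon _ _.
have act_a' : actB a' (bdeg i) = c.
  by apply: (epsilon_spec (inhabits (0 : A)) (fun a => actB a (bdeg i) = c)); exists a.
by rewrite act_a' eqxx (act_cancel (etrans act_a' (esym act_a))).
Qed.

Lemma assoc_grading_out c f i :
  ~ (exists a, actB a (bdeg i) = c) -> piB c f 0 i = 0.
Proof.
move=> no_a; rewrite mxE /=; set a := epsilon _ _.
by case: eqP => // act_a; case: no_a; exists a.
Qed.

Lemma assoc_gradingD c x y : piB c (x + y) = piB c x + piB c y.
Proof.
by apply/rowP => i; rewrite !mxE /=; case: ifP; rewrite ?addr0 ?(gradingD grading_R).
Qed.

Lemma assoc_grading0 c : piB c 0 = 0.
Proof. by apply: (addIr (piB c 0)); rewrite add0r -assoc_gradingD addr0. Qed.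

Lemma assoc_gradingB c x y : piB c (x - y) = piB c x - piB c y.
Proof.
have piBN : piB c (- y) = - piB c y.
  by apply/eqP; rewrite -addr_eq0 -assoc_gradingD addNr assoc_grading0.
by rewrite assoc_gradingD piBN.
Qed.

Lemma assoc_grading_sum (J : Type) c (r : seq J) (F : J -> 'rV[R]_n) :
  piB c (\sum_(j <- r) F j) = \sum_(j <- r) piB c (F j).
Proof. exact: (big_morph _ (assoc_gradingD c) (assoc_grading0 c)). Qed.

Lemma assoc_grading_idem c c' x : piB c (piB c' x) = if c == c' then piB c' x else 0.
Proof.
apply/rowP => i.
have [[a act_a]|no_a] := excluded_middle_informative (exists a, actB a (bdeg i) = c).
  rewrite (assoc_gradingE _ act_a).
  have [[a' act_a']|no_a'] := excluded_middle_informative (exists a, actB a (bdeg i) = c').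
    rewrite (assoc_gradingE _ act_a') (grading_idem grading_R).
    have [eq_a|ne_a] := eqVneq a a'.
      by move: act_a'; rewrite -eq_a act_a => <-; rewrite !eqxx (assoc_gradingE _ act_a).
    have -> : (c == c') = false.
      apply/eqP => cc'; move/eqP: ne_a; apply.
      by apply: (@act_cancel _ _ (bdeg i)); rewrite act_a act_a' cc'.
    by rewrite mxE.
  rewrite assoc_grading_out // (grading0 grading_R).
  case: eqP => [cc'|_]; last by rewrite mxE.
  by case: no_a'; exists a; rewrite -cc'.
rewrite assoc_grading_out //.
by case: eqP => [<-|_]; rewrite ?assoc_grading_out ?mxE.
Qed.

Lemma assoc_homogP c c' y : homog piB c' y -> piB c y = if c == c' then y else 0.
Proof. by rewrite /homog => <-; rewrite assoc_grading_idem. Qed.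

Lemma assoc_grading_coord (r : seq A) c (f : 'rV[R]_n) i :
  f 0 i = \sum_(a <- r) piR a (f 0 i) ->
  piB c f 0 i = \sum_(a <- r) (if actB a (bdeg i) == c then piR a (f 0 i) else 0).
Proof.
move=> f_sum.
have [[a0 act_a0]|no_a] := excluded_middle_informative (exists a, actB a (bdeg i) = c).
  rewrite (assoc_gradingE _ act_a0) {1}f_sum (grading_sum grading_R).
  apply: eq_bigr => a _; rewrite (grading_idem grading_R) -act_a0.
  by rewrite (inj_eq (fun a1 a2 => @act_cancel a1 a2 (bdeg i))) eq_sym.
rewrite assoc_grading_out // big1 // => a _.
by case: eqP => // act_a; case: no_a; exists a.
Qed.

End AssociatedGrading.

Section Refinement.
Variables (k : fieldType) (R : comAlgType k) (A : nmodType)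
  (dB : Order.disp_t) (B : orderType dB) (dB' : Order.disp_t) (B' : orderType dB')
  (actB : A -> B -> B) (piR : A -> R -> R) (n : nat) (bdeg : 'I_n -> B)
  (piF : B' -> 'rV[R]_n -> 'rV[R]_n) (g : B' -> B).
Hypothesis grading_R : is_grading (piR : A -> R^o -> R^o).
Hypothesis act_cancel : forall a a' b, actB a b = actB a' b -> a = a'.
Hypothesis grading_F : is_grading piF.
Hypothesis g_mono : forall x y, (x <= y)%O -> (g x <= g y)%O.

Local Notation piB := (assoc_grading piR actB bdeg).

Hypothesis refine : forall b v, homog piB b v <-> (forall b', piF b' v != 0 -> g b' = b).

Lemma assoc_grading_refined c e v : piB c (piF e v) = if c == g e then piF e v else 0.
Proof.
apply: assoc_homogP => //; apply/refine => e'.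
by rewrite grading_idem //; case: (eqVneq e' e) => [-> //|_]; rewrite eqxx.
Qed.

Lemma refined_part v b e : piF e (piB b v) = if g e == b then piF e v else 0.
Proof.
have [r [_ v_sum]] := grading_decomp grading_F v.
case: eqP => [<-|ne]; last first.
  have homog_b : homog piB b (piB b v) by rewrite /homog assoc_grading_idem // eqxx.
  by apply/eqP/negPn/negP => /((refine _ _).1 homog_b).
rewrite {1}v_sum assoc_grading_sum // grading_sum // {2}v_sum grading_sum //.
apply: eq_bigr => e' _; rewrite assoc_grading_refined grading_idem //.
have [->|ne] := eqVneq e e'; first by rewrite eqxx grading_idem // eqxx.
by case: ifP; rewrite ?grading0 // grading_idem // (negbTE ne).
Qed.

Lemma refined_component v e : piF e (piB (g e) v) = piF e v.
Proof. by rewrite refined_part eqxx. Qed.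

Lemma refined_part_support v b e : piF e (piB b v) != 0 -> g e = b.
Proof. by rewrite refined_part; have [//|_] := eqVneq (g e) b; rewrite eqxx. Qed.

Lemma assoc_grading_support c v : piB c v != 0 -> exists2 e, piF e v != 0 & c = g e.
Proof.
have [r [_ v_sum]] := grading_decomp grading_F v.
rewrite {1}v_sum assoc_grading_sum // => nz.
have /hasP [e _] : has (fun e => piB c (piF e v) != 0) r.
  apply/negPn/negP; rewrite -all_predC => /allP all0; move: nz.
  by rewrite big1_seq ?eqxx // => e /andP [_ /all0 /negPn /eqP].
rewrite assoc_grading_refined; have [-> nz'|_] := eqVneq c (g e); first by exists e.
by rewrite eqxx.
Qed.

(* Every nonzero row has a piB-degree: its B-support is the g-image of its
   finite B'-support. *)
Lemma assoc_grading_deg_exists v : v != 0 -> exists b, is_deg piB v b.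
Proof.
move=> v_nz; have [r [supp _]] := grading_decomp grading_F v.
apply: (is_deg_exists _ (l := map g r)).
  move=> c /assoc_grading_support [e e_nz ->]; apply: map_f.
  by apply: contraR e_nz => /supp ->; rewrite eqxx.
have [e e_nz] := grading_nz grading_F v_nz; exists (g e).
by apply: contraNneq e_nz => eq0; rewrite -refined_component eq0 grading0.
Qed.

Lemma refined_le_deg v b e : is_deg piB v b -> piF e v != 0 -> (g e <= b)%O.
Proof.
move=> [_ b_max] e_nz; apply: b_max.
by apply: contraNneq e_nz => eq0; rewrite -refined_component eq0 grading0.
Qed.

Lemma is_deg_refined v b e : is_deg piB v b -> (is_deg piF v e <-> is_deg piF (piB b v) e).
Proof.
move=> deg_b.
have [e0 e0_nz] := grading_nz grading_F (proj1 deg_b).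
have g_e0 := refined_part_support e0_nz.
have e0v_nz : piF e0 v != 0 by move: e0_nz; rewrite refined_part g_e0 eqxx.
split => [[e_nz e_max]|[e_nz e_max]].
  have g_e : g e = b.
    by apply/le_anti; rewrite (refined_le_deg deg_b e_nz) -{1}g_e0 g_mono ?e_max.
  split; first by rewrite refined_part g_e eqxx.
  by move=> e' e'_nz; apply: e_max; rewrite -refined_component (refined_part_support e'_nz).
have g_e := refined_part_support e_nz.
split; first by move: e_nz; rewrite refined_part g_e eqxx.
move=> e' e'_nz; have [g_e'|ne] := eqVneq (g e') b.
  by apply: e_max; rewrite refined_part g_e' eqxx.
have lt_b : (g e' < b)%O by rewrite lt_neqAle ne (refined_le_deg deg_b e'_nz).
have [//|lt_e] := leP e' e.
by move: (g_mono (ltW lt_e)); rewrite g_e leNgt lt_b.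
Qed.

Lemma lf_refined v b z : is_deg piB v b -> (is_lf piF v z <-> is_lf piF (piB b v) z).
Proof.
move=> deg_b.
have same_top e : is_deg piF (piB b v) e -> piF e (piB b v) = piF e v.
  by case=> /refined_part_support <- _; rewrite refined_component.
split => [[e [deg_e ->]]|[e [deg_e ->]]]; exists e.
  by have deg_e' := (is_deg_refined e deg_b).1 deg_e; rewrite same_top.
by rewrite same_top //; split => //; apply/(is_deg_refined e deg_b).
Qed.

End Refinement.

Lemma combB (R : pzRingType) (V : lmodType R) (n : nat) (f f' : 'rV[R]_n)
    (u : 'I_n -> V) :
  comb (f - f') u = comb f u - comb f' u.
Proof. by rewrite /comb -sumrB; apply: eq_bigr => i _; rewrite !mxE scalerBl. Qed.

Section Combination.
Variables (k : fieldType) (R : comAlgType k) (A : nmodType) (dB : Order.disp_t)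
  (B : orderType dB) (actB : A -> B -> B) (piR : A -> R -> R) (N : lmodType R)
  (piN : B -> N -> N) (n : nat) (m : 'I_n -> N) (bdeg : 'I_n -> B).
Hypothesis grading_R : is_grading (piR : A -> R^o -> R^o).
Hypothesis graded_N : graded_module piR actB piN.
Hypothesis act_mono : forall a b b', (b <= b')%O -> (actB a b <= actB a b')%O.
Hypothesis act_cancel : forall a a' b, actB a b = actB a' b -> a = a'.
Hypothesis act_cancel_r : forall a b b', actB a b = actB a b' -> b = b'.
Hypothesis m_deg : forall i, is_deg piN (m i) (bdeg i).

Local Notation piB := (assoc_grading piR actB bdeg).
Local Notation lf := (fun i => piN (bdeg i) (m i)).

Let grading_N : is_grading piN := graded_N.1.

Lemma homog_scale c a e r x : homog piR a r -> homog piN e x ->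
  piN c (r *: x) = if c == actB a e then r *: x else 0.
Proof. by move=> r_a x_e; apply: (homogP grading_N); apply: graded_N.2. Qed.

Lemma comb_term_top i a r b c : homog piR a r ->
  (actB a (bdeg i) <= b)%O -> (b <= c)%O ->
  piN c (r *: m i) = (if (actB a (bdeg i) == b) && (c == b) then r else 0) *: lf i.
Proof.
move=> r_a le_b le_c; set X := (_ && _).
have [r' [_ m_sum]] := grading_decomp grading_N (m i).
rewrite {1}m_sum /= {2}m_sum grading_sum // !scaler_sumr grading_sum //.
apply: eq_bigr => e _; rewrite (@homog_scale c a e) /homog ?grading_idem ?eqxx //.
have [->|e_nz] := eqVneq (piN e (m i)) 0; first by rewrite !scaler0 !if_same scaler0.
have le_e : (actB a e <= actB a (bdeg i))%O by apply/act_mono/(proj2 (m_deg i)).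
have -> : (c == actB a e) = (bdeg i == e) && X.
  apply/eqP/idP => [c_e|/andP [/eqP <- /andP [/eqP -> /eqP ->]] //].
  have c_b : c = b by apply/le_anti; rewrite le_c c_e (le_trans le_e le_b).
  have a_b : actB a (bdeg i) = b by apply/le_anti; rewrite le_b -c_b c_e le_e.
  have e_i : e = bdeg i by apply: (@act_cancel_r a); rewrite -c_e c_b a_b.
  by rewrite /X e_i a_b c_b !eqxx.
by case: (bdeg i == e); case: X; rewrite ?scale0r ?scaler0.
Qed.

Lemma comb_top p b c : (forall c', piB c' p != 0 -> (c' <= b)%O) -> (b <= c)%O ->
  piN c (comb p m) = if c == b then comb (piB b p) lf else 0.
Proof.
move=> p_le le_c; rewrite /comb grading_sum //.
have -> : (if c == b then \sum_(i < n) piB b p 0 i *: lf i else 0) =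
          \sum_(i < n) (if c == b then piB b p 0 i *: lf i else 0).
  by case: ifP => // _; rewrite big1.
apply: eq_bigr => i _.
have [r [_ p_sum]] := grading_decomp grading_R (p 0 i).
have term a : piN c (piR a (p 0 i) *: m i) =
    (if (actB a (bdeg i) == b) && (c == b) then piR a (p 0 i) else 0) *: lf i.
  have [->|nz] := eqVneq (piR a (p 0 i)) 0.
    by rewrite scale0r grading0 // if_same scale0r.
  apply: comb_term_top => //; first by rewrite /homog (grading_idem grading_R) eqxx.
  apply: p_le; apply: contraNneq nz => piB0.
  by rewrite -(assoc_gradingE piR act_cancel p (erefl (actB a (bdeg i)))) piB0 mxE.
rewrite {1}p_sum scaler_suml grading_sum //.
under eq_bigr => a _ do rewrite term.
rewrite -scaler_suml; have [_|_] := eqVneq c b.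
  under eq_bigr => a _ do rewrite andbT.
  by rewrite -(assoc_grading_coord bdeg grading_R act_cancel b p_sum).
by rewrite big1 ?scale0r // => a _; rewrite andbF.
Qed.

Lemma syz_leading_part p b : syz m p -> is_deg piB p b -> syz lf (piB b p).
Proof.
move=> p_syz [_ b_max]; have := comb_top b_max (lexx b).
by rewrite eqxx p_syz grading0.
Qed.

Lemma comb_syz_lower s b : homog piB b s -> syz lf s ->
  forall c, (b <= c)%O -> piN c (comb s m) = 0.
Proof.
move=> s_b s_syz c le_c.
rewrite (comb_top _ le_c) => [|c']; first by rewrite s_b; case: ifP.
rewrite (assoc_homogP grading_R act_cancel c' s_b).
by have [->|_] := eqVneq c' b; rewrite ?eqxx.
Qed.

Lemma lift_leading s h b : s != 0 -> homog piB b s -> syz lf s ->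
  (comb s m = 0 -> h = 0) ->
  (forall d, comb s m != 0 -> is_deg piN (comb s m) d ->
     forall c, piB c h != 0 -> (c <= d)%O) ->
  is_deg piB (s - h) b /\ piB b (s - h) = s.
Proof.
move=> s_nz s_b s_syz h0 h_le.
have h_above c : (b <= c)%O -> piB c h = 0.
  have [comb0|comb_nz] := eqVneq (comb s m) 0; first by rewrite (h0 comb0) assoc_grading0.
  have [d d_deg] := grading_deg_exists grading_N comb_nz.
  have lt_d : (d < b)%O.
    by rewrite ltNge; apply: contraL (proj1 d_deg) => /comb_syz_lower -> //; rewrite ?eqxx.
  move=> le_c; apply/eqP/negPn/negP => /(h_le _ comb_nz d_deg) le_cd.
  by move: (le_lt_trans le_cd lt_d); rewrite ltNge le_c.
have top : piB b (s - h) = s by rewrite assoc_gradingB // s_b h_above // subr0.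
split=> //; split=> [|c]; first by rewrite top.
rewrite assoc_gradingB // (assoc_homogP grading_R act_cancel c s_b).
have [->|_] := eqVneq c b => [//|]; have [//|lt_c] := leP c b.
by rewrite sub0r h_above ?ltW // oppr0 eqxx.
Qed.

End Combination.

Unset Implicit Arguments.

Theorem mainTheorem15
  (k : fieldType) (R : comAlgType k) (A : nmodType) (leA : rel A)
  (dB : Order.disp_t) (B : orderType dB) (dB' : Order.disp_t) (B' : orderType dB')
  (actB : A -> B -> B) (actB' : A -> B' -> B')
  (N : lmodType R) (piR : A -> R -> R) (piN : B -> N -> N) (M : N -> Prop)
  (* standing setup *)
  (HA1 : ordered_monoid leA) (HA2 : cancellative_fg_monoid A)
  (HR1 : graded_algebra piR) (HR2 : noetherian_ring R)
  (HB : ordered_action leA actB) (HB'0 : ordered_action leA actB')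
  (HN1 : graded_module piR actB piN) (HN2 : noetherian_mod N)
  (HM : is_submod M)
  (* Macaulay basis X = {m_1,...,m_n} of M, b_i = deg m_i *)
  (n : nat) (m : 'I_n -> N) (bdeg : 'I_n -> B)
  (Hdeg : forall i, is_deg piN (m i) (bdeg i))
  (HX : macaulay_basis piN M m)
  (* homogeneous generators s_1..s_k of Syz(lf m_1,...,lf m_n) *)
  (kk : nat) (s : 'I_kk -> 'rV[R]_n)
  (Hshom : forall j, exists b, homog (assoc_grading piR actB bdeg) b (s j))
  (Hsgen : forall f, syz (fun i => piN (bdeg i) (m i)) f <->
                     spanP (fun y => exists j, y = s j) f)
  (* the h_j *)
  (h : 'I_kk -> 'rV[R]_n)
  (Hh1 : forall j, comb (s j) m = comb (h j) m)
  (Hh2 : forall j, comb (s j) m = 0 -> h j = 0)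
  (Hh3 : forall j d, comb (s j) m != 0 -> is_deg piN (comb (s j) m) d ->
           forall b, assoc_grading piR actB bdeg b (h j) != 0 -> (b <= d)%O)
  (* a B'-grading of R^n refining the associated B-grading *)
  (piF' : B' -> 'rV[R]_n -> 'rV[R]_n)
  (HF' : graded_module piR actB' piF')
  (Href : refines actB actB' (assoc_grading piR actB bdeg) piF')
  (Hmac : macaulay_basis piF' (syz (fun i => piN (bdeg i) (m i))) s) :
  macaulay_basis piF' (syz m) (fun j => s j - h j).
Proof.
have [g [g_mono _ refine]] := Href.
have [_ [_ act_mono act_cancel act_cancel_r]] := HB.
have [grading_R _] := HR1.
have grading_F := HF'.1.
pose piB := assoc_grading piR actB bdeg.
have lf_ref := lf_refined grading_R act_cancel grading_F g_mono refine.
(* s'_j has piB-leading part s_j, hence the same piF'-leading form. *)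
have lead j : exists b, is_deg piB (s j - h j) b /\ piB b (s j - h j) = s j.
  have [b s_b] := Hshom j; have [s_nz s_syz] := Hmac.1 j.
  exists b; exact: (lift_leading grading_R HN1 act_mono act_cancel act_cancel_r Hdeg
    s_nz s_b s_syz (Hh2 j) (Hh3 j)).
have lf_lead j z : is_lf piF' (s j - h j) z <-> is_lf piF' (s j) z.
  have [b [deg_b top]] := lead j; rewrite -[in X in _ <-> X]top.
  exact: lf_ref.
have s'_syz j : syz m (s j - h j) by rewrite /syz combB Hh1 subrr.
have s'_nz j : s j - h j != 0.
  have [b [[top_nz _] _]] := lead j.
  by apply: contraNneq top_nz => ->; rewrite /piB (assoc_grading0 actB bdeg grading_R).
split=> [j|y]; first by split.
split=> y_span; last by apply: span_mono y_span => z [j lf_z]; exists (s j - h j).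
(* Conversely, leading forms of syzygies of the m_i are leading forms of
   syzygies of the lf(m_i), hence lie in the span of the lf(s_j) = lf(s'_j). *)
apply: (span_mono (G := fun z => exists j, is_lf piF' (s j) z)) => [z [j /lf_lead]|].
  by exists j.
apply/(Hmac.2 y); apply: span_mono y_span => z [p [p_syz p_nz lf_z]].
have [b deg_b] := assoc_grading_deg_exists grading_R act_cancel grading_F refine p_nz.
exists (piB b p); split; [|exact: (proj1 deg_b)|exact/(lf_ref _ _ z deg_b)].
exact: (syz_leading_part grading_R HN1 act_mono act_cancel act_cancel_r Hdeg p_syz deg_b).
Qed.
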